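(* Let $n\in\mathbb{Z}$ and let $x^n$ denote the $n$-th power of the invertible dot $x$ in $\mathrm{QAW}(A;z)$ (so $x^n$ is a power of $x^{-1}$ if $n<0$). In $\mathrm{End}_{\mathrm{QAW}(A;z)}(\uparrow\otimes\uparrow)$ the following hold, where $T:=z\sum_{b\in B_A}\tau_b\otimes\tau_{b^\vee}$: (i) $S\circ(1\otimes x^n)=(x^n\otimes 1)\circ S^- -\sum_{r+s=n,\ r,s>0}(x^r\otimes x^s)\circ T$ if $n>0$, and $S\circ(1\otimes x^n)=(x^n\otimes 1)\circ S^- +\sum_{r+s=n,\ r,s\le 0}(x^r\otimes x^s)\circ T$ if $n\le 0$; (ii) $S\circ(x^n\otimes 1)=(1\otimes x^n)\circ S^- +\sum_{r+s=n,\ r,s\ge 0}(x^r\otimes x^s)\circ T$ if $n\ge 0$, and $S\circ(x^n\otimes 1)=(1\otimes x^n)\circ S^- -\sum_{r+s=n,\ r,s<0}(x^r\otimes x^s)\circ T$ if $n<0$; (iii) $S^-\circ(x^n\otimes 1)=(1\otimes x^n)\circ S +\sum_{r+s=n,\ r,s>0}(x^r\otimes x^s)\circ T$ if $n>0$, and $S^-\circ(x^n\otimes 1)=(1\otimes x^n)\circ S -\sum_{r+s=n,\ r,s\le 0}(x^r\otimes x^s)\circ T$ if $n\le 0$; (iv) $S^-\circ(1\otimes x^n)=(x^n\otimes 1)\circ S -\sum_{r+s=n,\ r,s\ge 0}(x^r\otimes x^s)\circ T$ if $n\ge 0$, and $S^-\circ(1\otimes x^n)=(x^n\otimes 1)\circ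 S +\sum_{r+s=n,\ r,s<0}(x^r\otimes x^s)\circ T$ if $n<0$. (All sums are over pairs of integers $(r,s)$.)
   Context: Let $\Bbbk$ be a commutative ring, $z\in\Bbbk^\times$, and $A$ a symmetric Frobenius superalgebra over $\Bbbk$: it has an even trace $\mathrm{tr}:A\to\Bbbk$ with $\mathrm{tr}(ab)=(-1)^{\bar a\bar b}\mathrm{tr}(ba)$, a homogeneous basis $B_A$ and a left dual basis $\{b^\vee\}$ with $\mathrm{tr}(b^\vee c)=\delta_{b,c}$. Monoidal supercategories satisfy the super interchange law $(f'\otimes g)\circ(f\otimes g')=(-1)^{\bar f\bar g}(f'\circ f)\otimes(g\circ g')$. The quantum affine wreath product category $\mathrm{QAW}(A;z)$ is the strict $\Bbbk$-linear monoidal supercategory generated by one object $\uparrow$ and morphisms: even $S,S^-:\uparrow\otimes\uparrow\to\uparrow\otimes\uparrow$ (positive and negative crossing), $\tau_a:\uparrow\to\uparrow$ of parity $\bar a$ for $a\in A$ (tokens), and an even invertible $x:\uparrow\to\uparrow$ (dot), subject to: $a\mapsto\tau_a$ is a unital superalgebra homomorphism $A\to\mathrm{End}(\uparrow)$; $S\circ S^-=S^-\circ S=1_{\uparrow\otimes\uparrow}$; $(S\otimes 1)(1\otimes S)(S\otimes 1)=(1\otimes S)(S\otimes 1)(1\otimes S)$; $S\circ(\tau_a\otimes 1)=(1\otimes\tau_a)\circ S$ and $S^-\circ(\tau_a\otimes 1)=(1\otimes\tau_a)\circ S^-$; $S-S^-=z\sum_{b\in B_A}\tau_b\otimes\tau_{b^\vee}$;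 $x\circ\tau_a=\tau_a\circ x$; $S\circ(1\otimes x)=(x\otimes1)\circ S^-$ and $S^-\circ(x\otimes 1)=(1\otimes x)\circ S$. *)

(* Quantum affine wreath product category QAW(A;z),
   rendered through its universal property: a statement about QAW(A;z)
   is stated for every strict k-linear monoidal supercategory generated
   (as far as objects go) by one object, equipped with morphisms S, S^-,
   tau_a, x (and x^{-1}) satisfying the defining relations of QAW(A;z).
   QAW(A;z) is itself such a model, and it is the initial one. *)
From HB Require Import structures.
From mathcomp Require Import all_boot all_order all_algebra.
Set Implicit Arguments. Unset Strict Implicit. Unset Printing Implicit Defensive.
Import GRing.Theory.
Local Open Scope ring_scope.

Definition sgn (R : pzRingType) (b : bool) : R := if b then -1 else 1.

(* V = V_0 (+) V_1 as a super k-module; par p v means "v is homogeneous of parity p" *)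
Definition graded (k : pzRingType) (V : lmodType k) (par : bool -> pred V) : Prop :=
  [/\ (forall p, par p 0),
      (forall p (a : k) (u v : V), par p u -> par p v -> par p (a *: u + v)),
      (forall v : V, exists v0 v1, [/\ par false v0, par true v1 & v = v0 + v1]) &
      (forall v : V, par false v -> par true v -> v = 0)].

Definition is_superalg (k : comPzRingType) (A : algType k) (par : bool -> pred A) : Prop :=
  [/\ graded par, par false 1 &
      (forall p q (a b : A), par p a -> par q b -> par (p (+) q) (a * b))].

(* symmetric Frobenius superalgebra data: even trace tr, homogeneous basis bA
   (indexed by 'I_nB), left dual basis bAv with tr (bAv i * bA j) = delta_ij *)
Definition is_symm_frobenius (k : comPzRingType) (A : algType k) (par : bool -> pred A)
    (tr : A -> k) (nB : nat) (bA bAv : 'I_nB -> A) : Prop :=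
  [/\ is_superalg par,
      (forall (c : k) (u v : A), tr (c *: u + v) = c * tr u + tr v),
      (forall a : A, par true a -> tr a = 0) &
      (forall p q (a b : A), par p a -> par q b -> tr (a * b) = sgn k (p && q) * tr (b * a))] /\
  [/\ (forall i, exists p, par p (bA i)),
      (forall c : 'I_nB -> k, \sum_i c i *: bA i = 0 -> forall i, c i = 0),
      (forall a : A, exists c : 'I_nB -> k, a = \sum_i c i *: bA i) &
      (forall i j, tr (bAv i * bA j) = (i == j)%:R)].

(* A strict k-linear monoidal supercategory whose objects are the tensor powers
   of one object: object n = (up)^{(x) n}, with tensor on objects given by +. *)
Record msupercat (k : pzRingType) := MSupercat {
  Mor : nat -> nat -> lmodType k;
  mpar : forall m n, bool -> pred (Mor m n);
  mcomp : forall m n p, Mor n p -> Mor m n -> Mor m p;   (* mcomp g f = g o f *)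
  midm : forall n, Mor n n;
  mtens : forall m n m' n', Mor m n -> Mor m' n' -> Mor (m + m') (n + n')
}.
Arguments mcomp {k} m0 {m n p} : rename.
Arguments midm {k} m0 n : rename.
Arguments mtens {k} m0 {m n m' n'} : rename.
Arguments mpar {k} m0 {m n} : rename.

Definition castH (H : nat -> nat -> Type) m n m' n' (em : m = m') (en : n = n')
  (f : H m n) : H m' n' := match em, en with erefl, erefl => f end.

Definition is_msupercat (k : pzRingType) (C : msupercat k) : Prop :=
  [/\ [/\ (forall m n, graded (@mpar k C m n)),
      (forall m n p (a : k) (g g' : Mor C n p) (f : Mor C m n),
          mcomp C (a *: g + g') f = a *: mcomp C g f + mcomp C g' f),
      (forall m n p (a : k) (g : Mor C n p) (f f' : Mor C m n),
          mcomp C g (a *: f + f') = a *: mcomp C g f + mcomp C g f'),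
      (forall m n p q (h : Mor C p q) (g : Mor C n p) (f : Mor C m n),
          mcomp C h (mcomp C g f) = mcomp C (mcomp C h g) f) &
      (forall m n (f : Mor C m n), mcomp C (midm C n) f = f /\ mcomp C f (midm C m) = f)],
      (forall m n p b c (g : Mor C n p) (f : Mor C m n),
          mpar C b f -> mpar C c g -> mpar C (b (+) c) (mcomp C g f)),
      (forall n, mpar C false (midm C n)),
      (forall m n m' n' (a : k) (f f' : Mor C m n) (g : Mor C m' n'),
          mtens C (a *: f + f') g = a *: mtens C f g + mtens C f' g) /\
      (forall m n m' n' (a : k) (f : Mor C m n) (g g' : Mor C m' n'),
          mtens C f (a *: g + g') = a *: mtens C f g + mtens C f g') &
      [/\ (forall m n m' n' b c (f : Mor C m n) (g : Mor C m' n'),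
            mpar C b f -> mpar C c g -> mpar C (b (+) c) (mtens C f g)),
          (forall m n, mtens C (midm C m) (midm C n) = midm C (m + n)),
          (forall a b c d e h bf bg (f : Mor C a b) (f' : Mor C b c)
                  (g' : Mor C d e) (g : Mor C e h),
              mpar C bf f -> mpar C bg g ->
              mcomp C (mtens C f' g) (mtens C f g') =
              sgn k (bf && bg) *: mtens C (mcomp C f' f) (mcomp C g g')),
          (forall m n m' n' m'' n'' (f : Mor C m n) (g : Mor C m' n') (h : Mor C m'' n''),
              castH (H := Mor C) (addnA m m' m'') (addnA n n' n'') (mtens C f (mtens C g h))
              = mtens C (mtens C f g) h) &
          (forall m n (f : Mor C m n),
              mtens C (midm C 0) f = f /\
              castH (H := Mor C) (addn0 m) (addn0 n) (mtens C f (midm C 0)) = f)]].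

Definition Tel (k : pzRingType) (A : Type) (C : msupercat k) (z : k)
    (tau : A -> Mor C 1 1) (nB : nat) (bA bAv : 'I_nB -> A) : Mor C 2 2 :=
  z *: \sum_(i < nB) mtens C (tau (bA i)) (tau (bAv i)).

(* The defining relations of QAW(A;z), for the images S, Sm (= S^-), tau, x
   of the generators, together with an inverse xi of the dot x. *)
Definition QAW_relations (k : comPzRingType) (A : algType k) (Apar : bool -> pred A)
    (z : k) (nB : nat) (bA bAv : 'I_nB -> A)
    (C : msupercat k) (S Sm : Mor C 2 2) (tau : A -> Mor C 1 1) (x xi : Mor C 1 1) : Prop :=
  [/\ [/\ mpar C false S, mpar C false Sm, mpar C false x &
          (forall p (a : A), Apar p a -> mpar C p (tau a))],
      [/\
          (forall (c : k) (a b : A), tau (c *: a + b) = c *: tau a + tau b),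
          tau 1 = midm C 1 &
          (forall a b : A, tau (a * b) = mcomp C (tau a) (tau b))],
      (mcomp C x xi = midm C 1 /\ mcomp C xi x = midm C 1) /\
      (mcomp C S Sm = midm C 2 /\ mcomp C Sm S = midm C 2),
      (mcomp C (mtens C S (midm C 1) : Mor C 3 3)
        (mcomp C (mtens C (midm C 1) S : Mor C 3 3) (mtens C S (midm C 1) : Mor C 3 3))
      = mcomp C (mtens C (midm C 1) S : Mor C 3 3)
          (mcomp C (mtens C S (midm C 1) : Mor C 3 3) (mtens C (midm C 1) S : Mor C 3 3))) /\
      (forall a : A, mcomp C S (mtens C (tau a) (midm C 1)) = mcomp C (mtens C (midm C 1) (tau a)) S
                  /\ mcomp C Sm (mtens C (tau a) (midm C 1)) = mcomp C (mtens C (midm C 1) (tau a)) Sm) &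
      [/\
          S - Sm = @Tel k A C z tau nB bA bAv,
          (forall a : A, mcomp C x (tau a) = mcomp C (tau a) x),
          mcomp C S (mtens C (midm C 1) x) = mcomp C (mtens C x (midm C 1)) Sm &
          mcomp C Sm (mtens C x (midm C 1)) = mcomp C (mtens C (midm C 1) x) S]].

Definition xpow (k : pzRingType) (C : msupercat k) (x xi : Mor C 1 1) (n : int) : Mor C 1 1 :=
  match n with
  | Posz m => iter m (mcomp C x) (midm C 1)
  | Negz m => iter m.+1 (mcomp C xi) (midm C 1)
  end.

(* Write U r s := (x^r ⊗ x^s) ∘ T.  By the skein relation S = S⁻ + T, and since T commutes
   with x ⊗ 1 and 1 ⊗ x (dots are even and commute with tokens), the defect
   D n := (x^n ⊗ 1) ∘ S⁻ - S ∘ (1 ⊗ x^n) satisfies D (n + 1) = D n ∘ (1 ⊗ x) + U n 1, and so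
   do the signed sums in (i), which also take the value -T at n = 0.  Precomposition with the
   invertible 1 ⊗ x is injective, so this recurrence determines a function on all of ℤ, which
   gives (i).  The same argument with x ⊗ 1 gives (ii), and substituting the skein relation
   once more turns (ii) and (i) into (iii) and (iv). *)

From HB Require Import structures.
From mathcomp Require Import all_boot all_order all_algebra zify.
Set Implicit Arguments.
Unset Strict Implicit.
Unset Printing Implicit Defensive.
Import Order.TTheory GRing.Theory.
Local Open Scope ring_scope.

Lemma big_ord_gt0 (R : Type) (idx : R) (op : Monoid.law idx) (m : nat) (F : 'I_m.+1 -> R) :
  \big[op/idx]_(i < m.+1 | (0 < i)%N) F i = \big[op/idx]_(i < m) F (lift ord0 i).
Proof. by rewrite big_mkcond big_ord_recl /= Monoid.mul1m. Qed.

Lemma int_recurrence_uniq (T : Type) (step : int -> T -> T) (f g : int -> T) :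
  (forall n, injective (step n)) ->
  (forall n, f (n + 1) = step n (f n)) -> (forall n, g (n + 1) = step n (g n)) ->
  f 0 = g 0 -> f =1 g.
Proof.
move=> step_inj fS gS fg0; elim/int_rec => [//|m IH|m IH].
  have -> : m.+1%:Z = m%:Z + 1 by lia.
  by rewrite fS gS IH.
apply: (step_inj (- m.+1%:Z)); rewrite -fS -gS.
by have -> : - m.+1%:Z + 1 = - m%:Z by lia.
Qed.

Section DotSums.
Variables (M : zmodType) (U : int -> int -> M).

Definition sum_pos (n : int) : M := \sum_(i < `|n|%N | (0 < i)%N) U i%:Z (n - i%:Z).
Definition sum_npos (n : int) : M := \sum_(i < `|n|.+1) U (- i%:Z) (n + i%:Z).
Definition sum_nneg (n : int) : M := \sum_(i < `|n|.+1) U i%:Z (n - i%:Z).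
Definition sum_neg (n : int) : M := \sum_(i < `|n|%N | (0 < i)%N) U (- i%:Z) (n + i%:Z).

Definition sum_gt (n : int) : M := if 0 < n then sum_pos n else - sum_npos n.
Definition sum_ge (n : int) : M := if 0 <= n then sum_nneg n else - sum_neg n.

Lemma sum_gt_pos n : 0 < n -> sum_gt n = sum_pos n.
Proof. by rewrite /sum_gt => ->. Qed.

Lemma sum_gt_npos n : n <= 0 -> sum_gt n = - sum_npos n.
Proof. by rewrite /sum_gt ltNge => ->. Qed.

Lemma sum_ge_nneg n : 0 <= n -> sum_ge n = sum_nneg n.
Proof. by rewrite /sum_ge => ->. Qed.

Lemma sum_ge_neg n : n < 0 -> sum_ge n = - sum_neg n.
Proof. by rewrite /sum_ge leNgt => ->. Qed.

Lemma sum_geE n : sum_ge n = sum_gt n + U n 0 + U 0 n.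
Proof.
case: n => [[|m]|m].
- rewrite sum_ge_nneg // sum_gt_npos // /sum_nneg /sum_npos !big_ord1.
  by rewrite subrr oppr0 addNr add0r.
- rewrite sum_ge_nneg // sum_gt_pos // /sum_nneg /sum_pos.
  rewrite big_ord_gt0 big_ord_recl big_ord_recr /= [LHS]addrC.
  by congr (_ + _ + _); congr (U _ _); rewrite /bump; lia.
- rewrite sum_ge_neg // sum_gt_npos // /sum_neg /sum_npos.
  rewrite big_ord_gt0 big_ord_recl big_ord_recr /=.
  have -> : U (- 0%Z) (Negz m + 0%Z) = U 0 (Negz m) by congr (U _ _); lia.
  have -> : U (- (bump 0 m)%:Z) (Negz m + (bump 0 m)%:Z) = U (Negz m) 0.
    by congr (U _ _); rewrite /bump; lia.
  by rewrite addrCA -addrA [U _ 0 + _]addrC opprD addrNK.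
Qed.

Lemma sum_gtS (rho : {additive M -> M}) :
  (forall a b, rho (U a b) = U a (b + 1)) ->
  forall n, sum_gt (n + 1) = rho (sum_gt n) + U n 1.
Proof.
move=> rhoU [[|m]|m].
- rewrite sum_gt_pos // sum_gt_npos // /sum_pos /sum_npos big_ord_gt0 big_ord0 big_ord1.
  by rewrite raddfN rhoU addNr.
- rewrite sum_gt_pos // sum_gt_pos // /sum_pos.
  have -> : `|(m.+1%:Z + 1)%R|%N = m.+2 by lia.
  rewrite !big_ord_gt0 big_ord_recr raddf_sum /=.
  congr (_ + _); last by congr (U _ _); rewrite /bump; lia.
  by apply: eq_bigr => i _; rewrite rhoU; congr (U _ _); rewrite /bump; lia.
- rewrite sum_gt_npos; last by lia.
  rewrite sum_gt_npos // /sum_npos.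
  have -> : `|(Negz m + 1)%R|%N = m by lia.
  rewrite [in RHS]big_ord_recr (raddfN rho) (raddfD rho) (raddf_sum rho) /= rhoU.
  have -> : U (- m.+1%:Z) (Negz m + m.+1%:Z + 1) = U (Negz m) 1 by congr (U _ _); lia.
  rewrite opprD addrNK; congr (- _).
  by apply: eq_bigr => i _; rewrite rhoU; congr (U _ _); lia.
Qed.

Lemma sum_geS (lam : {additive M -> M}) :
  (forall a b, lam (U a b) = U (a + 1) b) ->
  forall n, sum_ge (n + 1) = lam (sum_ge n) + U 0 (n + 1).
Proof.
move=> lamU [m|[|m]].
- rewrite sum_ge_nneg; last by lia.
  rewrite sum_ge_nneg // /sum_nneg.
  have -> : `|(m%:Z + 1)%R|%N = m.+1 by lia.
  rewrite big_ord_recl (raddf_sum lam) [RHS]addrC /=.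
  congr (_ + _); first by congr (U _ _); lia.
  by apply: eq_bigr => i _; rewrite lamU; congr (U _ _); rewrite /bump; lia.
- rewrite sum_ge_nneg // sum_ge_neg // /sum_nneg /sum_neg big_ord_gt0 big_ord0 big_ord1.
  by rewrite [in RHS]oppr0 (raddf0 lam) [RHS]add0r.
- have -> : Negz m.+1 + 1 = Negz m by lia.
  rewrite !sum_ge_neg // /sum_neg !big_ord_gt0 big_ord_recl (raddfN lam) (raddfD lam).
  rewrite (raddf_sum lam) /= lamU.
  have -> : U (- 1%:Z + 1) (Negz m.+1 + 1) = U 0 (Negz m) by congr (U _ _); lia.
  rewrite [RHS]addrC opprD addNKr; congr (- _).
  by apply: eq_bigr => i _; rewrite lamU; congr (U _ _); rewrite /bump; lia.
Qed.
End DotSums.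

Section Supercategory.
Variables (k : pzRingType) (C : msupercat k).
Hypothesis HC : is_msupercat C.

Lemma mcompA m n p q (h : Mor C p q) (g : Mor C n p) (f : Mor C m n) :
  mcomp C h (mcomp C g f) = mcomp C (mcomp C h g) f.
Proof. by case: HC => [[_ _ _ + _] _ _ _ _]; apply. Qed.

Lemma mcomp1l m n (f : Mor C m n) : mcomp C (midm C n) f = f.
Proof. by case: HC => [[_ _ _ _ idC] _ _ _ _]; case: (idC _ _ f). Qed.

Lemma mcomp1r m n (f : Mor C m n) : mcomp C f (midm C m) = f.
Proof. by case: HC => [[_ _ _ _ idC] _ _ _ _]; case: (idC _ _ f). Qed.

Lemma mtens11 m n : mtens C (midm C m) (midm C n) = midm C (m + n).
Proof. by case: HC => [_ _ _ _ [_ + _ _ _]]; apply. Qed.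

Lemma midm_even n : mpar C false (midm C n).
Proof. by case: HC. Qed.

Lemma mcomp_par m n p b c (g : Mor C n p) (f : Mor C m n) :
  mpar C b f -> mpar C c g -> mpar C (b (+) c) (mcomp C g f).
Proof. by case: HC => [_ + _ _ _]; apply. Qed.

Lemma mcomp_linearl {m n p} (f : Mor C m n) : linear (fun g : Mor C n p => mcomp C g f).
Proof. by case: HC => [[_ linC _ _ _] _ _ _ _] a g g'; apply: linC. Qed.

Lemma mcomp_linearr {m n p} (g : Mor C n p) : linear (fun f : Mor C m n => mcomp C g f).
Proof. by case: HC => [[_ _ linC _ _] _ _ _ _] a f f'; apply: linC. Qed.

Definition mcompr {m n p} (f : Mor C m n) : {linear Mor C n p -> Mor C m p} :=
  HB.pack (fun g : Mor C n p => mcomp C g f)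
    (GRing.isLinear.Build _ _ _ _ _ (mcomp_linearl f)).

Definition mcompl {m n p} (g : Mor C n p) : {linear Mor C m n -> Mor C m p} :=
  HB.pack (mcomp C g) (GRing.isLinear.Build _ _ _ _ _ (mcomp_linearr g)).

Lemma mcompDl m n p (g g' : Mor C n p) (f : Mor C m n) :
  mcomp C (g + g') f = mcomp C g f + mcomp C g' f.
Proof. exact: (raddfD (mcompr f)). Qed.

Lemma mcompDr m n p (g : Mor C n p) (f f' : Mor C m n) :
  mcomp C g (f + f') = mcomp C g f + mcomp C g f'.
Proof. exact: (raddfD (mcompl g)). Qed.

Lemma mcompBl m n p (g g' : Mor C n p) (f : Mor C m n) :
  mcomp C (g - g') f = mcomp C g f - mcomp C g' f.
Proof. exact: (raddfB (mcompr f)). Qed.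

Lemma mcompBr m n p (g : Mor C n p) (f f' : Mor C m n) :
  mcomp C g (f - f') = mcomp C g f - mcomp C g f'.
Proof. exact: (raddfB (mcompl g)). Qed.

Lemma mcompZl m n p a (g : Mor C n p) (f : Mor C m n) :
  mcomp C (a *: g) f = a *: mcomp C g f.
Proof. exact: (linearZ_LR (mcompr f)). Qed.

Lemma mcompZr m n p a (g : Mor C n p) (f : Mor C m n) :
  mcomp C g (a *: f) = a *: mcomp C g f.
Proof. exact: (linearZ_LR (mcompl g)). Qed.

Lemma mcomp_suml m n p (I : Type) (r : seq I) (P : pred I) (F : I -> Mor C n p)
    (f : Mor C m n) :
  mcomp C (\sum_(i <- r | P i) F i) f = \sum_(i <- r | P i) mcomp C (F i) f.
Proof. exact: (raddf_sum (mcompr f)). Qed.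

Lemma mcomp_sumr m n p (I : Type) (r : seq I) (P : pred I) (F : I -> Mor C m n)
    (g : Mor C n p) :
  mcomp C g (\sum_(i <- r | P i) F i) = \sum_(i <- r | P i) mcomp C g (F i).
Proof. exact: (raddf_sum (mcompl g)). Qed.

Lemma mtensDl m n m' n' (f f' : Mor C m n) (g : Mor C m' n') :
  mtens C (f + f') g = mtens C f g + mtens C f' g.
Proof. by case: HC => [_ _ _ [+ _] _] => /(_ _ _ _ _ 1 f f' g); rewrite !scale1r. Qed.

Lemma mtensDr m n m' n' (f : Mor C m n) (g g' : Mor C m' n') :
  mtens C f (g + g') = mtens C f g + mtens C f g'.
Proof. by case: HC => [_ _ _ [_ +] _] => /(_ _ _ _ _ 1 f g g'); rewrite !scale1r. Qed.

Lemma interchange_evenl a b c d e h (f : Mor C a b) (f' : Mor C b c)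
    (g' : Mor C d e) (g : Mor C e h) :
  mpar C false f ->
  mcomp C (mtens C f' g) (mtens C f g') = mtens C (mcomp C f' f) (mcomp C g g').
Proof.
case: HC => [[gradedC _ _ _ _] _ _ _ [_ _ xchC _ _]] pf.
have [_ _ /(_ g) [g0 [g1 [pg0 pg1 ->]]] _] := gradedC e h.
rewrite mtensDr mcompDl (xchC _ _ _ _ _ _ _ _ _ _ _ _ pf pg0).
by rewrite (xchC _ _ _ _ _ _ _ _ _ _ _ _ pf pg1) /sgn !scale1r mcompDl mtensDr.
Qed.

Lemma interchange_evenr a b c d e h (f : Mor C a b) (f' : Mor C b c)
    (g' : Mor C d e) (g : Mor C e h) :
  mpar C false g ->
  mcomp C (mtens C f' g) (mtens C f g') = mtens C (mcomp C f' f) (mcomp C g g').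
Proof.
case: HC => [[gradedC _ _ _ _] _ _ _ [_ _ xchC _ _]] pg.
have [_ _ /(_ f) [f0 [f1 [pf0 pf1 ->]]] _] := gradedC a b.
rewrite mtensDl mcompDr (xchC _ _ _ _ _ _ _ _ _ _ _ _ pf0 pg).
by rewrite (xchC _ _ _ _ _ _ _ _ _ _ _ _ pf1 pg) /sgn !andbF !scale1r mcompDr mtensDl.
Qed.

Lemma mcomp_tens_idl m n n' p p' (f : Mor C m n) (g : Mor C n' p') (h : Mor C p n') :
  mcomp C (mtens C f g) (mtens C (midm C m) h) = mtens C f (mcomp C g h).
Proof. by rewrite interchange_evenl ?midm_even // mcomp1r. Qed.

Lemma mcomp_tens_idr m n m' n' p (f : Mor C m n) (g : Mor C m' n') (h : Mor C p m) :
  mpar C false h ->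
  mcomp C (mtens C f g) (mtens C h (midm C m')) = mtens C (mcomp C f h) g.
Proof. by move=> ph; rewrite interchange_evenl // mcomp1r. Qed.

Lemma mcomp_idl_tens m n m' n' p (f : Mor C m n) (g : Mor C m' n') (h : Mor C n' p) :
  mpar C false h ->
  mcomp C (mtens C (midm C n) h) (mtens C f g) = mtens C f (mcomp C h g).
Proof. by move=> ph; rewrite interchange_evenr // mcomp1l. Qed.

Lemma mcomp_idr_tens m n m' n' p (f : Mor C m n) (g : Mor C m' n') (h : Mor C n p) :
  mcomp C (mtens C h (midm C n')) (mtens C f g) = mtens C (mcomp C h f) g.
Proof. by rewrite interchange_evenr ?midm_even // mcomp1l. Qed.

Lemma mcompr_inj m n p (f : Mor C m n) (f' : Mor C n m) :
  mcomp C f f' = midm C n -> injective (fun g : Mor C n p => mcomp C g f).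
Proof.
by move=> ff' g g' /(congr1 (mcomp C ^~ f')); rewrite -!mcompA ff' !mcomp1r.
Qed.

Lemma inverse_even m n (f : Mor C m n) (f' : Mor C n m) :
  mcomp C f f' = midm C n -> mcomp C f' f = midm C m ->
  mpar C false f -> mpar C false f'.
Proof.
move=> ff' f'f pf; case: HC => [[gradedC _ _ _ _] _ _ _ _].
have [_ _ /(_ f') [e [o [pe po f'E]]] _] := gradedC n m.
have [_ closedC _ even_odd0] := gradedC n n.
have fo0 : mcomp C f o = 0.
  apply: even_odd0; last exact: (mcomp_par po pf).
  have -> : mcomp C f o = (-1) *: mcomp C f e + midm C n.
    by rewrite -ff' f'E mcompDr scaleN1r addKr.
  by apply: closedC; [exact: (mcomp_par pe pf) | exact: midm_even].
have o0 : o = 0.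
  by rewrite -[o]mcomp1l -f'f -mcompA fo0; exact: (raddf0 (mcompl f')).
by rewrite f'E o0 addr0.
Qed.

Lemma iter_mcomp_comm n (u t : Mor C n n) :
  mcomp C u t = mcomp C t u ->
  forall j, mcomp C (iter j (mcomp C u) (midm C n)) t =
            mcomp C t (iter j (mcomp C u) (midm C n)).
Proof.
move=> ut; elim=> [|j IH] /=; first by rewrite mcomp1l mcomp1r.
by rewrite -mcompA IH !mcompA ut.
Qed.

Lemma iter_mcomp_even n (u : Mor C n n) :
  mpar C false u -> forall j, mpar C false (iter j (mcomp C u) (midm C n)).
Proof. by move=> pu; elim=> [|j IH] /=; [exact: midm_even | exact: (mcomp_par IH pu)]. Qed.

Lemma inverse_comm n (f f' t : Mor C n n) :
  mcomp C f f' = midm C n -> mcomp C f' f = midm C n ->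
  mcomp C f t = mcomp C t f -> mcomp C f' t = mcomp C t f'.
Proof.
move=> ff' f'f ft.
rewrite -[t in LHS]mcomp1r -ff' !mcompA -[mcomp C (mcomp C f' t) f]mcompA -ft.
by rewrite !mcompA f'f mcomp1l.
Qed.

End Supercategory.

Section DotPowers.
Variables (k : pzRingType) (C : msupercat k).
Hypothesis HC : is_msupercat C.
Variables (x xi : Mor C 1 1).
Hypotheses (x_xi : mcomp C x xi = midm C 1) (xi_x : mcomp C xi x = midm C 1).
Local Notation X := (xpow x xi).

Lemma xpowD1 n : X (n + 1) = mcomp C (X n) x.
Proof.
case: n => [m|[|m]].
- have -> : m%:Z + 1 = m.+1%:Z by lia.
  by rewrite /= (iter_mcomp_comm HC).
- by rewrite /= (mcomp1r HC) xi_x.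
- have -> : Negz m.+1 + 1 = Negz m by lia.
  rewrite /= -(iter_mcomp_comm HC (erefl (mcomp C xi xi)) m.+1).
  by rewrite -(mcompA HC) xi_x (mcomp1r HC).
Qed.

Lemma xpow_even : mpar C false x -> forall n, mpar C false (X n).
Proof.
move=> px [m|m]; apply: (iter_mcomp_even HC) => //.
exact: (inverse_even HC x_xi xi_x px).
Qed.

Lemma xpow_comm t :
  mcomp C x t = mcomp C t x -> forall n, mcomp C (X n) t = mcomp C t (X n).
Proof.
move=> xt [m|m]; apply: (iter_mcomp_comm HC) => //.
exact: (inverse_comm HC x_xi xi_x).
Qed.

End DotPowers.

Section Teleporter.
Variables (k : pzRingType) (C : msupercat k).
Hypothesis HC : is_msupercat C.
Variables (A : Type) (z : k) (tau : A -> Mor C 1 1) (nB : nat) (bA bAv : 'I_nB -> A).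
Local Notation T := (Tel z tau bA bAv).
Variable y : Mor C 1 1.
Hypotheses (y_even : mpar C false y) (y_tau : forall a, mcomp C y (tau a) = mcomp C (tau a) y).

Lemma Tel_comm_idl : mcomp C T (mtens C (midm C 1) y) = mcomp C (mtens C (midm C 1) y) T.
Proof.
rewrite /Tel (mcompZl HC) (mcompZr HC) (mcomp_suml HC) (mcomp_sumr HC); congr (_ *: _).
apply: eq_bigr => i _.
by rewrite (mcomp_tens_idl HC (tau _) (tau _) y) (mcomp_idl_tens HC (tau _) (tau _) y_even) y_tau.
Qed.

Lemma Tel_comm_idr : mcomp C T (mtens C y (midm C 1)) = mcomp C (mtens C y (midm C 1)) T.
Proof.
rewrite /Tel (mcompZl HC) (mcompZr HC) (mcomp_suml HC) (mcomp_sumr HC); congr (_ *: _).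
apply: eq_bigr => i _.
by rewrite (mcomp_tens_idr HC (tau _) (tau _) y_even) (mcomp_idr_tens HC (tau _) (tau _) y) y_tau.
Qed.

End Teleporter.

Section DotSlides.
Variables (k : pzRingType) (C : msupercat k).
Hypothesis HC : is_msupercat C.
Variables (A : Type) (z : k) (tau : A -> Mor C 1 1) (nB : nat) (bA bAv : 'I_nB -> A).
Variables (S Sm : Mor C 2 2) (x xi : Mor C 1 1).
Hypotheses (x_even : mpar C false x) (x_xi : mcomp C x xi = midm C 1)
  (xi_x : mcomp C xi x = midm C 1) (x_tau : forall a, mcomp C x (tau a) = mcomp C (tau a) x).
Local Notation T := (Tel z tau bA bAv).
Hypotheses (skein : S - Sm = T)
  (S_dotr : mcomp C S (mtens C (midm C 1) x) = mcomp C (mtens C x (midm C 1)) Sm)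
  (Sm_dotl : mcomp C Sm (mtens C x (midm C 1)) = mcomp C (mtens C (midm C 1) x) S).
Local Notation X := (xpow x xi).
Local Notation I1 := (midm C 1).

Definition dotTel (a b : int) : Mor C 2 2 := mcomp C (mtens C (X a) (X b)) T.

Lemma dotTel_shiftr a b : mcomp C (dotTel a b) (mtens C I1 x) = dotTel a (b + 1).
Proof.
by rewrite -(mcompA HC) (Tel_comm_idl HC _ _ _ x_even x_tau) (mcompA HC)
  (mcomp_tens_idl HC (X a) (X b) x) -(xpowD1 HC xi_x).
Qed.

Lemma dotTel_shiftl a b : mcomp C (dotTel a b) (mtens C x I1) = dotTel (a + 1) b.
Proof.
by rewrite -(mcompA HC) (Tel_comm_idr HC _ _ _ x_even x_tau) (mcompA HC)
  (mcomp_tens_idr HC (X a) (X b) x_even) -(xpowD1 HC xi_x).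
Qed.

Lemma mcomp_id_dot_inj : injective (fun v : Mor C 2 2 => mcomp C v (mtens C I1 x)).
Proof.
apply: (mcompr_inj HC (f' := mtens C I1 xi)).
by rewrite (mcomp_tens_idl HC I1 x xi) x_xi (mtens11 HC).
Qed.

Lemma mcomp_dot_id_inj : injective (fun v : Mor C 2 2 => mcomp C v (mtens C x I1)).
Proof.
apply: (mcompr_inj HC (f' := mtens C xi I1)).
by rewrite (mcomp_idr_tens HC xi I1 x) x_xi (mtens11 HC).
Qed.

Lemma xpow_even_comm n :
  mpar C false (X n) /\ forall a, mcomp C (X n) (tau a) = mcomp C (tau a) (X n).
Proof.
split; first exact: (xpow_even HC x_xi xi_x x_even).
by move=> a; apply: (xpow_comm HC x_xi xi_x (x_tau a)).
Qed.

Lemma tens_xpowl_S n :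
  mcomp C (mtens C (X n) I1) S = mcomp C (mtens C (X n) I1) Sm + dotTel n 0.
Proof. by rewrite -[S](subrK Sm) skein addrC (mcompDr HC). Qed.

Lemma tens_xpowr_S n :
  mcomp C (mtens C I1 (X n)) S = mcomp C (mtens C I1 (X n)) Sm + dotTel 0 n.
Proof. by rewrite -[S](subrK Sm) skein addrC (mcompDr HC). Qed.

Lemma Sm_tens_xpowl n :
  mcomp C Sm (mtens C (X n) I1) = mcomp C S (mtens C (X n) I1) - dotTel n 0.
Proof.
have [Xn_even Xn_tau] := xpow_even_comm n.
by rewrite -[Sm](subKr S) skein (mcompBl HC) (Tel_comm_idr HC _ _ _ Xn_even Xn_tau).
Qed.

Lemma Sm_tens_xpowr n :
  mcomp C Sm (mtens C I1 (X n)) = mcomp C S (mtens C I1 (X n)) - dotTel 0 n.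
Proof.
have [Xn_even Xn_tau] := xpow_even_comm n.
by rewrite -[Sm](subKr S) skein (mcompBl HC) (Tel_comm_idl HC _ _ _ Xn_even Xn_tau).
Qed.

Lemma S_xpowr n :
  mcomp C S (mtens C I1 (X n)) = mcomp C (mtens C (X n) I1) Sm - sum_gt dotTel n.
Proof.
have SmE : Sm = S - T by rewrite -skein subKr.
suff /(_ n) <- :
    (fun n => mcomp C (mtens C (X n) I1) Sm - mcomp C S (mtens C I1 (X n))) =1 sum_gt dotTel.
  by rewrite subKr.
apply: (int_recurrence_uniq (step := fun n v => mcomp C v (mtens C I1 x) + dotTel n 1)).
- by move=> m v w /addIr /mcomp_id_dot_inj.
- move=> m /=.
  have Sm_dotr :
      mcomp C Sm (mtens C I1 x) = mcomp C (mtens C x I1) Sm - mcomp C T (mtens C I1 x).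
    by rewrite {1}SmE (mcompBl HC) S_dotr.
  rewrite (mcompBl HC) -!(mcompA HC) (mcomp_tens_idl HC I1 (X m) x) -(xpowD1 HC xi_x).
  rewrite Sm_dotr (mcompBr HC) !(mcompA HC) (mcomp_idr_tens HC x I1 (X m)) -(xpowD1 HC xi_x).
  by rewrite (dotTel_shiftr m 0) addrAC subrK.
- exact: sum_gtS (mcompr HC (mtens C I1 x)) dotTel_shiftr.
- rewrite sum_gt_npos // /sum_npos big_ord1 /dotTel !(mtens11 HC).
  by rewrite !(mcomp1l HC) (mcomp1r HC) -skein opprB.
Qed.

Lemma S_xpowl n :
  mcomp C S (mtens C (X n) I1) = mcomp C (mtens C I1 (X n)) Sm + sum_ge dotTel n.
Proof.
suff /(_ n) <- :
    (fun n => mcomp C S (mtens C (X n) I1) - mcomp C (mtens C I1 (X n)) Sm) =1 sum_ge dotTel.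
  by rewrite addrC subrK.
apply: (int_recurrence_uniq (step := fun n v => mcomp C v (mtens C x I1) + dotTel 0 (n + 1))).
- by move=> m v w /addIr /mcomp_dot_id_inj.
- move=> m /=.
  rewrite (mcompBl HC) -!(mcompA HC) (mcomp_idr_tens HC x I1 (X m)) -(xpowD1 HC xi_x).
  rewrite Sm_dotl (mcompA HC) (mcomp_tens_idl HC I1 (X m) x) -(xpowD1 HC xi_x).
  by rewrite tens_xpowr_S opprD addrA subrK.
- exact: sum_geS (mcompr HC (mtens C x I1)) dotTel_shiftl.
- rewrite sum_ge_nneg // /sum_nneg big_ord1 /dotTel !(mtens11 HC).
  by rewrite !(mcomp1l HC) (mcomp1r HC) skein.
Qed.

Lemma Sm_xpowl n :
  mcomp C Sm (mtens C (X n) I1) = mcomp C (mtens C I1 (X n)) S + sum_gt dotTel n.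
Proof.
rewrite Sm_tens_xpowl S_xpowl tens_xpowr_S (sum_geE dotTel) -addrA -[RHS]addrA.
by congr (_ + _); rewrite addrAC addrK addrC.
Qed.

Lemma Sm_xpowr n :
  mcomp C Sm (mtens C I1 (X n)) = mcomp C (mtens C (X n) I1) S - sum_ge dotTel n.
Proof.
rewrite Sm_tens_xpowr S_xpowr tens_xpowl_S (sum_geE dotTel) -!addrA.
by congr (_ + _); rewrite opprD addrCA opprD addNKr.
Qed.

End DotSlides.

Theorem lemma3p1
  (k : comPzRingType) (z : k) (A : algType k) (Apar : bool -> pred A)
  (tr : A -> k) (nB : nat) (bA bAv : 'I_nB -> A)
  (C : msupercat k) (S Sm : Mor C 2 2) (tau : A -> Mor C 1 1) (x xi : Mor C 1 1) :
  (exists z' : k, z * z' = 1) ->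
  is_symm_frobenius Apar tr bA bAv ->
  is_msupercat C ->
  QAW_relations Apar z bA bAv S Sm tau x xi ->
  let T := @Tel k A C z tau nB bA bAv in
  let X := xpow x xi in
  let I1 := midm C 1 in
  forall n : int,
  (* (i) *)
  (0 < n -> mcomp C S (mtens C I1 (X n)) =
     mcomp C (mtens C (X n) I1) Sm
     - \sum_(i < `|n|%N | (0 < i)%N) mcomp C (mtens C (X i%:Z) (X (n - i%:Z))) T) /\
  (n <= 0 -> mcomp C S (mtens C I1 (X n)) =
     mcomp C (mtens C (X n) I1) Sm
     + \sum_(i < `|n|.+1) mcomp C (mtens C (X (- i%:Z)) (X (n + i%:Z))) T) /\
  (* (ii) *)
  (0 <= n -> mcomp C S (mtens C (X n) I1) =
     mcomp C (mtens C I1 (X n)) Sm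
     + \sum_(i < `|n|.+1) mcomp C (mtens C (X i%:Z) (X (n - i%:Z))) T) /\
  (n < 0 -> mcomp C S (mtens C (X n) I1) =
     mcomp C (mtens C I1 (X n)) Sm
     - \sum_(i < `|n|%N | (0 < i)%N) mcomp C (mtens C (X (- i%:Z)) (X (n + i%:Z))) T) /\
  (* (iii) *)
  (0 < n -> mcomp C Sm (mtens C (X n) I1) =
     mcomp C (mtens C I1 (X n)) S
     + \sum_(i < `|n|%N | (0 < i)%N) mcomp C (mtens C (X i%:Z) (X (n - i%:Z))) T) /\
  (n <= 0 -> mcomp C Sm (mtens C (X n) I1) =
     mcomp C (mtens C I1 (X n)) S
     - \sum_(i < `|n|.+1) mcomp C (mtens C (X (- i%:Z)) (X (n + i%:Z))) T) /\
  (* (iv) *)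
  (0 <= n -> mcomp C Sm (mtens C I1 (X n)) =
     mcomp C (mtens C (X n) I1) S
     - \sum_(i < `|n|.+1) mcomp C (mtens C (X i%:Z) (X (n - i%:Z))) T) /\
  (n < 0 -> mcomp C Sm (mtens C I1 (X n)) =
     mcomp C (mtens C (X n) I1) S
     + \sum_(i < `|n|%N | (0 < i)%N) mcomp C (mtens C (X (- i%:Z)) (X (n + i%:Z))) T).

Proof.
move=> _ _ HC [[_ _ x_even _] _ [[x_xi xi_x] _] _ [skein x_tau S_dotr Sm_dotl]] T X I1 n.
rewrite (S_xpowr HC x_even x_xi xi_x x_tau skein S_dotr).
rewrite (S_xpowl HC x_even x_xi xi_x x_tau skein Sm_dotl).
rewrite (Sm_xpowl HC x_even x_xi xi_x x_tau skein Sm_dotl).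
rewrite (Sm_xpowr HC x_even x_xi xi_x x_tau skein S_dotr).
repeat split; move=> hn.
- by rewrite sum_gt_pos.
- by rewrite sum_gt_npos // opprK.
- by rewrite sum_ge_nneg.
- by rewrite sum_ge_neg.
- by rewrite sum_gt_pos.
- by rewrite sum_gt_npos.
- by rewrite sum_ge_nneg.
- by rewrite sum_ge_neg // opprK.
Qed.
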